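(* Let $\mathbb{F}_q$ be a finite field of characteristic $p$, let $r,v,k,t$ be positive integers, and let $f(x):=x^r h_k(x^v)^t$ where $h_k(x):=x^{k-1}+x^{k-2}+\dots+1$. Let $s:=\gcd(v,q-1)$, $d:=(q-1)/s$ and $e:=v/s$. Suppose that $\gcd(r,s)=\gcd(d,k)=1$, that $\gcd(d,2r+vt(k-1))\le 2$, that $k^{st}\equiv (-1)^{(d+1)(r+1)}\pmod{p}$, and that $d$ is an odd prime. Pick $\omega\in\mathbb{F}_q$ of order $d$. Consider the condition \[( * )\qquad \frac{\zeta^k-\zeta^{-k}}{\zeta-\zeta^{-1}}\in\mu_{st}\ \text{ for every } \zeta\in\mu_d\setminus\mu_1.\] Then: (a) If $( * )$ holds then $f$ permutes $\mathbb{F}_q$. (b) If $d=3$ then $f$ permutes $\mathbb{F}_q$. (c) If $d=5$ then $f$ permutes $\mathbb{F}_q$ if and only if $( * )$ holds. (d) If $d=7$ then $f$ permutes $\mathbb{F}_q$ if and only if either $( * )$ holds or there exists $\epsilon\in\{1,-1\}$ such that \[\left(\frac{\omega^{ike}-\omega^{-ike}}{\omega^{ie}-\omega^{-ie}}\right)^{st}=\omega^{2\epsilon(2r+(k-1)vt)i}\] for every $i\in\{1,2,4\}$. (e) If $d=11$ then $f$ permutes $\mathbb{F}_q$ if and only if either $( * )$ holds or there is some $\psi\in\mathcal{C}$ such that \[\left(\frac{\omega^{ike}-\omega^{-ike}}{\omega^{ie}-\omega^{-ie}}\right)^{st}=\omega^{(2r+(k-1)vt)\psi(i)}\] for every $i\in(\mathbb{F}_{11}^*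 )^2$, where $\mathcal{C}$ is the union of the sets $\{i\mapsto mi : m\in\{\pm3,\pm5\}\}$, $\{i\mapsto 5m^3i^4+m^7i^3-2mi^2-4m^5i : m\in\mathbb{F}_{11}^*\}$ and $\{i\mapsto 4m^3i^4+m^7i^3-2mi^2-5m^5i : m\in\mathbb{F}_{11}^*\}$ (functions $\mathbb{F}_{11}\to\mathbb{F}_{11}$).
   Context: $\mu_n$ denotes the set of $n$-th roots of unity in $\mathbb{F}_q$ (so $\mu_1=\{1\}$). Since $\omega$ has order $d$, $\omega^a$ is well defined for $a\in\mathbb{Z}/d\mathbb{Z}=\mathbb{F}_d$, and integers $i$ are identified with their residues mod $d$. A polynomial permutes $\mathbb{F}_q$ if the induced map is a bijection. *)

From HB Require Import structures.
From mathcomp Require Import all_boot all_order all_algebra all_field.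
Set Implicit Arguments. Unset Strict Implicit. Unset Printing Implicit Defensive.
Import GRing.Theory.
Local Open Scope ring_scope.

Definition hk {R : nzRingType} (k : nat) : {poly R} := \sum_(i < k) 'X^i.

Definition fpoly {R : comNzRingType} (r v k t : nat) : {poly R} :=
  'X^r * ((hk k) \Po 'X^v) ^+ t.

Definition permutes {F : finFieldType} (P : {poly F}) : Prop :=
  bijective (fun x : F => P.[x]).

Definition mu {F : fieldType} (n : nat) (x : F) : Prop := x ^+ n = 1.

Definition star_cond {F : fieldType} (d k n : nat) : Prop :=
  forall z : F, mu d z -> ~ mu 1 z ->
    mu n ((z ^+ k - z ^- k) / (z - z^-1)).

Definition C11 (psi : 'F_11 -> 'F_11) : Prop :=
  (exists m : 'F_11, (m = 3 \/ m = -3 \/ m = 5 \/ m = -5) /\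
      psi = (fun i => m * i)) \/
  (exists m : 'F_11, m != 0 /\
      psi = (fun i => 5 * m ^+ 3 * i ^+ 4 + m ^+ 7 * i ^+ 3
                      - 2 * m * i ^+ 2 - 4 * m ^+ 5 * i)) \/
  (exists m : 'F_11, m != 0 /\
      psi = (fun i => 4 * m ^+ 3 * i ^+ 4 + m ^+ 7 * i ^+ 3
                      - 2 * m * i ^+ 2 - 5 * m ^+ 5 * i)).

Definition nzsq11 (i : 'F_11) : Prop := exists j : 'F_11, j != 0 /\ i = j ^+ 2.

(* For [x != 0] write [x^s = omega^(2 i)] (possible as [d] is odd) and [zeta_i = omega^(i e)],
   so that [x^v = zeta_i^2].  Since [h_k(z^2) = z^(k-1) R_k(z)] with
   [R_k(z) = (z^k - z^-k) / (z - z^-1)], this gives [f(x)^s = omega^(i E + b_i)], where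
   [E = 2r + vt(k-1)] and [R_k(zeta_i)^(st) = omega^(b_i)] ([b_0 = 0] because [k^(st) = 1]).
   Moreover [f(z x) = z^r f(x)] for [z^s = 1], and [gcd(r, s) = 1], so [f] is injective on
   each coset [x mu_s].  Hence [f] permutes [F_q] iff no [R_k(zeta_i)] vanishes and
   [i |-> i E + b_i] permutes [Z/d].  As [b_(d-i) = b_i], for [d = 5, 7, 11] these
   permutations are classified by an exhaustive search over the values of [b] on one
   representative of each pair [{j, d - j}]; for [d = 3], [R_k(zeta) = 1] or [-1]. *)

From HB Require Import structures.
From mathcomp Require Import all_boot all_order all_algebra all_field.
From mathcomp Require Import cyclic zify ring.
Import GRing.Theory.

Lemma mem_iota0 {n i} : i < n -> i \in iota 0 n.
Proof. by rewrite mem_iota. Qed.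

Lemma uniq_map_in_inj {T1 T2 : eqType} {g : T1 -> T2} {s : seq T1} :
  uniq (map g s) -> {in s &, injective g}.
Proof.
elim: s => //= a s IH /andP[gas U] x y.
rewrite !inE => /predU1P[->|xs] /predU1P[->|ys] // gxy.
- by rewrite gxy map_f in gas.
- by rewrite -gxy map_f in gas.
- exact: IH.
Qed.

Lemma gcdn_le_ndvd m n c : c < m -> gcdn m n <= c -> ~~ (m %| n).
Proof. by move=> cm mn; apply/negP => /gcdn_idPl mn_eq; move: mn; rewrite mn_eq leqNgt cm. Qed.

Section Twist.
Variables (d E : nat).

Definition twist (b : nat -> nat) (i : nat) := (i * E + b i) %% d.

Lemma uniq_twist0 : prime d -> E %% d != 0 -> uniq [seq twist (fun=> 0) i | i <- iota 0 d].
Proof.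
move=> d_prime E_ndvd; rewrite map_inj_in_uniq ?iota_uniq // => i j.
rewrite !mem_iota /twist !addn0 /= => id jd /eqP.
wlog le_ji : i j id jd / j <= i => [W|].
  by case: (leqP j i) => [|/ltnW] h; [exact: W | rewrite eq_sym => /(W _ _ jd id h)].
rewrite eqn_mod_dvd ?leq_mul2r ?le_ji ?orbT // -mulnBl Euclid_dvdM //.
rewrite [d %| E]/dvdn (negbTE E_ndvd) orbF.
by case: (posnP (i - j)) => [? _ | ij_gt0 /(dvdn_leq ij_gt0)]; lia.
Qed.

Definition twist_pair (j x : nat) := [:: (j * E + x) %% d; ((d - j) * E + x) %% d].

Definition twist_pairs (b : nat -> nat) (R : seq nat) :=
  flatten [seq twist_pair j (b j) | j <- R].

Lemma eq_twist_pairs b b' R : {in R, b =1 b'} -> twist_pairs b R = twist_pairs b' R.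
Proof. by move=> e; rewrite /twist_pairs; congr flatten; apply/eq_in_map => j /e ->. Qed.

Lemma map_twist_sym b R : {in R, forall j, b (d - j) = b j} ->
  [seq twist b i | i <- flatten [seq [:: j; d - j] | j <- R]] = twist_pairs b R.
Proof.
elim: R => [|j R IH] // sym.
have -> : twist_pairs b (j :: R) = twist_pair j (b j) ++ twist_pairs b R by [].
rewrite /= -IH => [|i Ri]; last by apply: sym; rewrite inE Ri orbT.
by rewrite /twist sym ?mem_head.
Qed.

Lemma uniq_twist_sym b R : b 0 = 0 -> {in R, forall j, b (d - j) = b j} ->
  perm_eq (0 :: flatten [seq [:: j; d - j] | j <- R]) (iota 0 d) ->
  uniq [seq twist b i | i <- iota 0 d] = uniq (0 :: twist_pairs b R).
Proof.
move=> b0 sym /(perm_map (twist b)) /perm_uniq <-.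
by rewrite map_cons map_twist_sym // /twist b0 mod0n.
Qed.

(* Depth-first enumeration of the values [x] of a symmetric [b] on [R], pruning
   as soon as the twisted values found so far collide (with an [if] rather than [==>],
   which [vm_compute] would evaluate eagerly). *)
Fixpoint twist_search (P : pred (seq nat)) (R acc xs : seq nat) : bool :=
  if R is j :: R' then
    all (fun x => let acc' := acc ++ twist_pair j x in
                  if uniq acc' then twist_search P R' acc' (rcons xs x) else true)
        (iota 0 d)
  else P xs.

Lemma twist_searchP P R acc xs (b : nat -> nat) :
  twist_search P R acc xs -> {in R, forall j, b j < d} ->
  uniq (acc ++ twist_pairs b R) -> P (xs ++ map b R).
Proof.
elim: R acc xs => [|j R IH] acc xs; first by rewrite /= cats0.
have -> : twist_pairs b (j :: R) = twist_pair j (b j) ++ twist_pairs b R by [].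
move=> /allP search bd; rewrite catA => U.
have /= := search (b j) (mem_iota0 (bd j (mem_head j R))).
have U1 : uniq (acc ++ twist_pair j (b j)) by move: U; rewrite cat_uniq => /andP[].
rewrite U1 => /IH; rewrite cat_rcons; apply=> // i Ri.
by apply: bd; rewrite inE Ri orbT.
Qed.

End Twist.

Lemma twist_mod d E b i : twist d (E %% d) b i = twist d E b i.
Proof. by rewrite /twist -modnDml modnMmr modnDml. Qed.

Definition twist_rows d E R (rows : seq (nat -> nat)) :=
  [seq [seq E * g j %% d | j <- R] | g <- rows].

(* [R] holds one representative of each pair [{j, d - j}] of nonzero residues;
   [rows] lists the exponents (divided by [E]) of the injective twists. *)
Definition twist_classifies d R (rows : seq (nat -> nat)) :=
  [&& all (fun j => 0 < j < d) R,
      perm_eq (0 :: flatten [seq [:: j; d - j] | j <- R]) (iota 0 d) &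
      all (fun E => twist_search d E (mem (twist_rows d E R rows)) R [:: 0] [::] &&
          all (fun g => uniq (0 :: twist_pairs d E (fun j => E * g j %% d) R)) rows)
        (iota 1 d.-1)].

Lemma twist_classifies_cover {d R rows} : twist_classifies d R rows ->
  forall i, (0 < i < d) = (i \in R) || (d - i \in R).
Proof.
case/and3P=> /allP Rd /perm_mem cover _ i; apply/idP/idP => [/andP[i0 id]|].
  have := cover i; rewrite mem_iota id inE eqn0Ngt i0 /= => /flattenP[_ /mapP[j Rj ->]].
  rewrite !inE => /predU1P[->|/eqP->]; first by rewrite Rj.
  by have /andP[_ /ltnW jd] := Rd j Rj; rewrite subKn // Rj orbT.
by case/orP=> /Rd; lia.
Qed.

Lemma twist_classifiesP {d R rows E b} :
  twist_classifies d R rows -> E %% d != 0 -> b 0 = 0 -> (forall i, b i < d) ->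
  (forall i, 0 < i < d -> b (d - i) = b i) ->
  uniq [seq twist d E b i | i <- iota 0 d] = ([seq b j | j <- R] \in twist_rows d E R rows).
Proof.
case/and3P=> /allP Rd cover /allP check E_d b0 bd sym.
have d_gt0 : 0 < d by move: (perm_size cover); rewrite size_iota; case: (d).
have symR : {in R, forall j, b (d - j) = b j} by move=> j /Rd /sym.
have rowsE : twist_rows d E R rows = twist_rows d (E %% d) R rows.
  by apply/eq_map => g; apply/eq_map => j; rewrite modnMml.
rewrite -(eq_map (twist_mod d E b)) (@uniq_twist_sym d (E %% d) b R b0 symR cover) rowsE.
have E_mem : E %% d \in iota 1 d.-1 by rewrite mem_iota; have := ltn_pmod E d_gt0; lia.
have /andP[search uniq_rows] := check _ E_mem.
apply/idP/idP => [U|].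
  exact: (@twist_searchP d (E %% d) _ _ _ _ b search (fun j _ => bd j) U).
elim: rows {check search rowsE} uniq_rows => // g rows IH /andP[Ug Urows].
rewrite /twist_rows map_cons inE => /orP[/eqP/eq_in_map e|]; last exact: IH.
by rewrite (@eq_twist_pairs d (E %% d) _ _ _ e).
Qed.

Lemma twist_classifies5 : twist_classifies 5 [:: 1; 2] [:: fun=> 0].
Proof. by vm_compute. Qed.

Lemma twist_classifies7 :
  twist_classifies 7 [:: 1; 2; 4] [:: fun=> 0; fun j => 2 * j; fun j => 5 * j].
Proof. by vm_compute. Qed.

Local Open Scope ring_scope.

Lemma expr_coprime_eq1 {R : nzRingType} {x : R} {m n : nat} :
  (0 < m)%N -> coprime m n -> x ^+ m = 1 -> x ^+ n = 1 -> x = 1.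
Proof.
move=> m_gt0 mn xm xn; have [a _] := Bezoutl n m_gt0.
rewrite (eqP mn) => /dvdnP[c hc].
have : x ^+ (1 + a * n) = x ^+ (c * m) by rewrite hc.
by rewrite exprD mulnC exprM xn expr1n mulr1 mulnC exprM xm expr1n expr1.
Qed.

Lemma natrX_eq1_pchar {R : nzRingType} {p n m : nat} : p \in [pchar R] ->
  (n%:Z ^+ m = 1 %[mod p%:Z])%Z -> (n%:R : R) ^+ m = 1.
Proof.
move=> pR /eqP; rewrite eqz_mod_dvd (dvdz_pcharf pR) rmorphB rmorphXn /= rmorph1.
by rewrite subr_eq0 => /eqP.
Qed.

Definition F11_units : seq 'F_11 := [seq m <- [seq i%:R | i <- iota 0 11] | m != 0].

Lemma mem_F11_units m : (m \in F11_units) = (m != 0).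
Proof.
rewrite mem_filter andb_idr // => _; rewrite -[m]natr_Zp.
by apply: map_f; rewrite mem_iota; exact: ltn_ord m.
Qed.

Definition psi11 : seq ('F_11 -> 'F_11) :=
  [seq (fun i => m * i) | m <- [:: 3; -3; 5; -5]] ++
  [seq (fun i => 5 * m ^+ 3 * i ^+ 4 + m ^+ 7 * i ^+ 3 - 2 * m * i ^+ 2 - 4 * m ^+ 5 * i)
     | m <- F11_units] ++
  [seq (fun i => 4 * m ^+ 3 * i ^+ 4 + m ^+ 7 * i ^+ 3 - 2 * m * i ^+ 2 - 5 * m ^+ 5 * i)
     | m <- F11_units].

Lemma C11_psi11 (Q : pred ('F_11 -> 'F_11)) : (exists psi, C11 psi /\ Q psi) <-> has Q psi11.
Proof.
rewrite !has_cat !has_map; split.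
  case=> psi [[[m [mA ->]]|[[m [m0 ->]]|[m [m0 ->]]]] Qpsi]; apply/or3P.
  - apply/Or31/hasP; exists m => //.
    by rewrite !inE; case: mA => [|[|[|]]] ->; rewrite eqxx ?orbT.
  - by apply/Or32/hasP; exists m; rewrite ?mem_F11_units.
  - by apply/Or33/hasP; exists m; rewrite ?mem_F11_units.
case/or3P=> /hasP[m mS Qm]; (eexists; split; [|exact: Qm]).
- red; left; exists m; split=> //.
  by move: mS; rewrite !inE => /or4P[]/eqP->; auto.
- by red; right; left; exists m; rewrite -mem_F11_units.
- by red; right; right; exists m; rewrite -mem_F11_units.
Qed.

Definition squares11 : seq nat := [:: 1; 3; 4; 5; 9].

Lemma nzsq11P (P : 'F_11 -> Prop) :
  (forall i, nzsq11 i -> P i) <-> (forall j, j \in squares11 -> P j%:R).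
Proof.
split=> [sqP j j_sq | sqP i [m [m0 ->]]].
  have : all (fun j : nat => has (fun m : 'F_11 => m ^+ 2 == j%:R) F11_units) squares11.
    by vm_compute.
  move=> /allP/(_ j j_sq)/hasP[m]; rewrite mem_F11_units => m0 /eqP <-.
  by apply: sqP; exists m.
have : all (fun m : 'F_11 => val (m ^+ 2) \in squares11) F11_units by vm_compute.
by move=> /allP/(_ m); rewrite mem_F11_units => /(_ m0)/sqP; rewrite natr_Zp.
Qed.

Lemma twist_classifies11 : twist_classifies 11 squares11
  ((fun=> 0%N) :: [seq (fun j => val (psi j%:R)) | psi <- psi11]).
Proof. by vm_compute. Qed.

Lemma val_squares11 j : j \in squares11 -> val (j%:R : 'F_11) = j.
Proof. by move=> jS; apply/eqP; move: j jS; apply/allP. Qed.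

Definition kratio {F : fieldType} (k : nat) (z : F) := (z ^+ k - z ^- k) / (z - z^-1).

Lemma kratioV (F : fieldType) k (z : F) : kratio k z^-1 = kratio k z.
Proof.
rewrite /kratio invrK exprVn invrK -[z^-1 - z]opprB -[z ^- k - _]opprB.
by rewrite invrN mulrNN.
Qed.

Lemma horner_hk (R : comNzRingType) k (x : R) : (hk k).[x] = \sum_(i < k) x ^+ i.
Proof. by rewrite /hk horner_sum; apply: eq_bigr => i _; rewrite hornerXn. Qed.

Lemma horner_fpoly (R : comNzRingType) r v k t (x : R) :
  (fpoly r v k t).[x] = x ^+ r * (\sum_(i < k) (x ^+ v) ^+ i) ^+ t.
Proof. by rewrite /fpoly hornerM hornerXn horner_exp horner_comp hornerXn horner_hk. Qed.

Lemma sum_geom_sqr (F : fieldType) k (z : F) : (0 < k)%N -> z != 0 -> z ^+ 2 != 1 ->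
  \sum_(i < k) (z ^+ 2) ^+ i = z ^+ k.-1 * kratio k z.
Proof.
case: k => // k _ z0 z2; have z2B1 : z ^+ 2 - 1 != 0 by rewrite subr_eq0.
apply: (mulIf z2B1); rewrite mulrC -subrX1 -exprM /kratio /=.
have zB : z ^+ 2 - 1 = z * (z - z^-1) by rewrite mulrBr mulfV // expr2.
have zk0 : z ^+ k != 0 by rewrite expf_neq0.
rewrite mulnC exprM !(exprSr z k) zB; field.
by rewrite z0 zk0 -expr2 z2B1.
Qed.

Section FiniteField.
Context {F : finFieldType}.

Lemma expf_card_pred (x : F) : x != 0 -> x ^+ #|F|.-1 = 1.
Proof.
move=> x0; apply: (mulIf x0); rewrite mul1r -exprSr prednK ?expf_card //.
exact: ltn_trans (finNzRing_gt1 F).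
Qed.

Lemma unity_root_expf {s d : nat} {y : F} : (s * d)%N = #|F|.-1 -> y ^+ d = 1 ->
  exists2 x : F, x != 0 & x ^+ s = y.
Proof.
move=> sd yd; have n_gt0 : (0 < #|F|.-1)%N by have := finNzRing_gt1 F; case: #|F| => [|[]].
have [g g0 pg] : exists2 g : F, g != 0 & (#|F|.-1).-primitive_root g.
  have : has (#|F|.-1).-primitive_root (enum (predC1 (0 : F))).
    apply: has_prim_root n_gt0 _ (enum_uniq _) _.
      by apply/allP => x; rewrite mem_enum /= => x0; rewrite unity_rootE expf_card_pred.
    by rewrite -cardE cardC1.
  by case/hasP => g; rewrite mem_enum /= => g0 pg; exists g.
have d_gt0 : (0 < d)%N by move: n_gt0; rewrite -sd; case: (d); rewrite ?muln0.
have pgs : d.-primitive_root (g ^+ s).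
  have dvd_d : (d %| #|F|.-1)%N by rewrite -sd dvdn_mull.
  by have := dvdn_prim_root pg dvd_d; rewrite -sd mulnK.
by have [j ->] := prim_rootP pgs yd; exists (g ^+ j); rewrite ?expf_neq0 // exprAC.
Qed.

End FiniteField.

Section Criterion.
Context {F : finFieldType} {r v k t : nat} {omega : F}.
Local Notation s := (gcdn v #|F|.-1).
Local Notation d := (#|F|.-1 %/ gcdn v #|F|.-1)%N.
Local Notation e := (v %/ gcdn v #|F|.-1)%N.
Local Notation E := (2 * r + v * t * (k - 1))%N.
Local Notation f := (fpoly (R := F) r v k t).
Local Notation zratio i :=
  ((omega ^+ (i * k * e) - omega ^- (i * k * e)) / (omega ^+ (i * e) - omega ^- (i * e))).

Hypotheses (r_gt0 : (0 < r)%N) (v_gt0 : (0 < v)%N) (k_gt0 : (0 < k)%N) (t_gt0 : (0 < t)%N).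
Hypotheses (d_prime : prime d) (d_odd : odd d) (omega_prim : d.-primitive_root omega).
Hypotheses (kX_st : (k%:R : F) ^+ (s * t) = 1) (r_s_coprime : coprime r s).
Hypothesis E_mod_d : (E %% d != 0)%N.

Lemma s_gt0 : (0 < s)%N. Proof. by rewrite gcdn_gt0 v_gt0. Qed.
Lemma d_gt0 : (0 < d)%N. Proof. exact: prime_gt0. Qed.
Lemma d_gt2 : (2 < d)%N.
Proof. by have := prime_gt1 d_prime; move: d_odd; case: (d) => [|[|[|]]]. Qed.

Lemma mul_sd : (s * d)%N = #|F|.-1. Proof. by rewrite mulnC divnK // dvdn_gcdr. Qed.
Lemma v_es : v = (e * s)%N. Proof. by rewrite divnK // dvdn_gcdl. Qed.

Lemma coprime_e_d : coprime e d.
Proof.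
have es : (gcdn e d * s)%N = s by rewrite muln_gcdl -v_es mulnC mul_sd.
by rewrite /coprime -(eqn_pmul2r s_gt0) es mul1n.
Qed.

Lemma omega_neq0 : omega != 0.
Proof.
apply: contra_eq_neq (prim_expr_order omega_prim) => ->.
by rewrite expr0n gtn_eqF ?d_gt0 // eq_sym oner_neq0.
Qed.

Lemma omegaX_unity_root j : (omega ^+ j) ^+ d = 1.
Proof. by rewrite exprAC (prim_expr_order omega_prim) expr1n. Qed.

Lemma unity_root_d (x : F) : x != 0 -> (x ^+ s) ^+ d = 1.
Proof. by move=> x0; rewrite -exprM mul_sd expf_card_pred. Qed.

Lemma omegaX_half (y : F) : y ^+ d = 1 -> exists2 i, (i < d)%N & y = omega ^+ (2 * i).
Proof.
move=> /(prim_rootP omega_prim)[j ->].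
(* [(d + 1) / 2] inverts [2] modulo the odd [d]. *)
have half2 : (2 * (d.+1)./2)%N = d.+1 by rewrite -[RHS]odd_double_half /= d_odd -muln2 mulnC.
exists ((j * (d.+1)./2) %% d)%N; first exact: ltn_pmod _ d_gt0.
apply/eqP; rewrite eq_sym (eq_prim_root_expr omega_prim) modnMmr mulnA [(2 * j)%N]mulnC.
by rewrite -mulnA half2 mulnS addnC modnMDl.
Qed.

Definition zeta (i : nat) := omega ^+ (i * e).

Lemma zeta_neq0 i : zeta i != 0. Proof. exact: expf_neq0 omega_neq0. Qed.

Lemma exprv_zeta {x i} : x ^+ s = omega ^+ (2 * i) -> x ^+ v = zeta i ^+ 2.
Proof. by move=> xi; rewrite v_es mulnC exprM xi -!exprM; congr (_ ^+ _); ring. Qed.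

Lemma zeta_sqr_neq1 {i} : (0 < i < d)%N -> zeta i ^+ 2 != 1.
Proof.
case/andP=> i0 id; rewrite -exprM -(prim_order_dvd omega_prim) -mulnA !Euclid_dvdM //.
have /negbTE-> : ~~ (d %| e)%N by rewrite -prime_coprime // coprime_sym coprime_e_d.
rewrite orFb negb_or; apply/andP; split; apply/negP.
  by move=> /(dvdn_leq i0); rewrite leqNgt id.
by move=> /(dvdn_leq (isT : (0 < 2)%N)); rewrite leqNgt d_gt2.
Qed.

Lemma kratio_zeta_sub i : (0 < i < d)%N -> kratio k (zeta (d - i)) = kratio k (zeta i).
Proof.
case/andP=> _ /ltnW id; rewrite -[RHS]kratioV; congr (kratio k _).
apply: (mulIf (zeta_neq0 i)); rewrite mulVf ?zeta_neq0 // -exprD -mulnDl subnK //.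
by rewrite exprM (prim_expr_order omega_prim) expr1n.
Qed.

Definition dlog (y : F) : nat :=
  if [pick j : 'I_d | y == omega ^+ j] is Some j then val j else 0%N.

Lemma dlog_lt y : (dlog y < d)%N.
Proof. by rewrite /dlog; case: pickP => [j _|_]; [exact: ltn_ord | exact: d_gt0]. Qed.

Lemma dlogK y : y ^+ d = 1 -> omega ^+ dlog y = y.
Proof.
move=> yd; rewrite /dlog; case: pickP => [j /eqP //|none].
by have [j yj] := prim_rootP omega_prim yd; have := none j; rewrite yj eqxx.
Qed.

(* [b_i]: [kratio k (zeta i) ^+ (s * t) = omega ^+ rexp i], with junk value [0] when
   the ratio vanishes. *)
Definition rexp (i : nat) : nat :=
  if i == 0%N then 0%N else dlog (kratio k (zeta i) ^+ (s * t)).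

Lemma rexp0 : rexp 0 = 0%N. Proof. by []. Qed.

Lemma rexp_lt i : (rexp i < d)%N.
Proof. by rewrite /rexp; case: eqP => _; [exact: d_gt0 | exact: dlog_lt]. Qed.

Lemma rexp_sub i : (0 < i < d)%N -> rexp (d - i) = rexp i.
Proof.
move=> hi; case/andP: (hi) => i0 id.
by rewrite /rexp kratio_zeta_sub // subn_eq0 leqNgt id eqn0Ngt i0.
Qed.

Lemma kratioX_rexp i : (0 < i)%N -> kratio k (zeta i) != 0 ->
  kratio k (zeta i) ^+ (s * t) = omega ^+ rexp i.
Proof.
rewrite /rexp => /gtn_eqF-> nz; apply/esym/dlogK.
by rewrite -exprM mulnAC exprM mul_sd expf_card_pred // expr1n.
Qed.

Lemma kratioX_eq {i m} : (0 < i)%N ->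
  kratio k (zeta i) ^+ (s * t) = omega ^+ m <-> kratio k (zeta i) != 0 /\ rexp i = (m %% d)%N.
Proof.
move=> i0; split=> [km | [nz rexpE]]; last by rewrite kratioX_rexp // rexpE prim_expr_mod.
have nz : kratio k (zeta i) != 0.
  apply: contra_eq_neq km => ->; rewrite expr0n muln_eq0 !gtn_eqF ?s_gt0 //=.
  by rewrite eq_sym expf_neq0 // omega_neq0.
split=> //; move/eqP: km; rewrite kratioX_rexp // (eq_prim_root_expr omega_prim).
by rewrite modn_small ?rexp_lt // => /eqP.
Qed.

Lemma hornerf0 : f.[0] = 0.
Proof. by rewrite horner_fpoly expr0n gtn_eqF // mul0r. Qed.

Lemma hornerf_expS x i : (i < d)%N -> x ^+ s = omega ^+ (2 * i) ->
  ((0 < i)%N -> kratio k (zeta i) != 0) -> f.[x] ^+ s = omega ^+ (i * E + rexp i).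
Proof.
move=> id xi nz; rewrite horner_fpoly exprMn exprAC xi -!exprM [(t * s)%N]mulnC.
rewrite (exprv_zeta xi).
case: (posnP i) => [->|i0].
  rewrite /zeta !mul0n !expr0 mul1r (eq_bigr (fun=> 1)) => [|j _]; last by rewrite !expr1n.
  by rewrite sumr_const card_ord kX_st.
rewrite sum_geom_sqr ?zeta_neq0 ?zeta_sqr_neq1 ?i0 // exprMn kratioX_rexp ?nz //.
rewrite /zeta -!exprM -!exprD; congr (_ ^+ _).
by have := v_es; move: (s) (e) => s' e' ->; rewrite subn1; ring.
Qed.

Lemma hornerf_mul_unity z x : z ^+ s = 1 -> f.[z * x] = z ^+ r * f.[x].
Proof.
move=> zs; have zv : z ^+ v = 1 by rewrite v_es mulnC exprM zs expr1n.
by rewrite !horner_fpoly !exprMn zv mul1r mulrA.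
Qed.

Lemma fibre_index {x : F} : x != 0 -> exists2 i, (i < d)%N & x ^+ s = omega ^+ (2 * i).
Proof. by move=> /unity_root_d; exact: omegaX_half. Qed.

Lemma permutes_fpoly :
  (forall i, (0 < i < d)%N -> kratio k (zeta i) != 0) ->
  uniq [seq twist d E rexp i | i <- iota 0 d] -> permutes f.
Proof.
move=> nz U; apply: injF_bij => x x' /= fxx'.
have powS y : y != 0 -> exists2 i, (i < d)%N &
    y ^+ s = omega ^+ (2 * i) /\ f.[y] ^+ s = omega ^+ (i * E + rexp i).
  case/fibre_index=> i id yi; exists i => //; split=> //.
  by apply: hornerf_expS => // i0; apply: nz; rewrite i0.
have f_neq0 y : y != 0 -> f.[y] != 0.
  case/powS=> i _ [_ fy]; apply: contra_eq_neq fy => ->.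
  by rewrite expr0n gtn_eqF ?s_gt0 // eq_sym expf_neq0 // omega_neq0.
have [x0|x_neq0] := eqVneq x 0; have [x'0|x'_neq0] := eqVneq x' 0.
- by rewrite x0 x'0.
- by move: fxx'; rewrite x0 hornerf0 => /esym/eqP; rewrite (negbTE (f_neq0 _ x'_neq0)).
- by move: fxx'; rewrite x'0 hornerf0 => /eqP; rewrite (negbTE (f_neq0 _ x_neq0)).
have [i id [xi fxi]] := powS x x_neq0; have [j jd [x'j fx'j]] := powS x' x'_neq0.
have ij : i = j.
  apply: (uniq_map_in_inj U); rewrite ?mem_iota //.
  by apply/eqP; rewrite -(eq_prim_root_expr omega_prim) -fxi -fx'j fxx'.
pose z := x' / x; have x'E : x' = z * x by rewrite mulfVK.
have zs : z ^+ s = 1 by rewrite exprMn exprVn x'j -ij -xi mulfV // expf_neq0.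
have zr : z ^+ r = 1.
  by apply: (mulIf (f_neq0 _ x_neq0)); rewrite mul1r -hornerf_mul_unity // -x'E fxx'.
by rewrite x'E (expr_coprime_eq1 r_gt0 r_s_coprime zr zs) mul1r.
Qed.

Lemma permutes_neq0 {x : F} : permutes f -> x != 0 -> f.[x] != 0.
Proof.
by move=> /bij_inj f_inj x0; apply: contra_neq x0 => fx0; apply: f_inj; rewrite /= fx0 hornerf0.
Qed.

Lemma permutes_fpoly_kratio : permutes f ->
  forall i, (0 < i < d)%N -> kratio k (zeta i) != 0.
Proof.
move=> fb i /andP[i0 id].
have [c c0 ci] := unity_root_expf mul_sd (omegaX_unity_root (2 * i)).
have := permutes_neq0 fb c0; rewrite horner_fpoly (exprv_zeta ci).
rewrite sum_geom_sqr ?zeta_neq0 ?zeta_sqr_neq1 ?i0 ?id //.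
by apply: contra_neq => ->; rewrite mulr0 expr0n gtn_eqF // mulr0.
Qed.

Lemma permutes_fpoly_uniq : permutes f -> uniq [seq twist d E rexp i | i <- iota 0 d].
Proof.
move=> fb; have nz := permutes_fpoly_kratio fb; case: fb => g _ gK.
apply: (leq_size_uniq (iota_uniq 0 d)) => [j|]; last by rewrite size_map.
rewrite mem_iota add0n => jd.
have [c c0 cj] := unity_root_expf mul_sd (omegaX_unity_root j).
have gc0 : g c != 0 by apply: contra_neq c0 => gc; rewrite -[c]gK /= gc hornerf0.
have [i id gi] := fibre_index gc0.
have fgc : f.[g c] ^+ s = omega ^+ (i * E + rexp i).
  by apply: hornerf_expS => // i0; apply: nz; rewrite i0.
apply/mapP; exists i; first by rewrite mem_iota.
move: fgc; rewrite gK cj => /eqP; rewrite (eq_prim_root_expr omega_prim).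
by rewrite modn_small // => /eqP.
Qed.

Lemma kratio_zetaE i : kratio k (zeta i) = zratio i.
Proof. by rewrite /kratio /zeta -exprM mulnAC. Qed.

Lemma star_condE : star_cond (F := F) d k (s * t) <->
  forall i, (0 < i < d)%N -> kratio k (zeta i) ^+ (s * t) = 1.
Proof.
split=> [star i hi | kX z zd z1].
  apply: star; first exact: omegaX_unity_root.
  by rewrite /mu expr1 => z1; have := zeta_sqr_neq1 hi; rewrite z1 expr1n eqxx.
have omega_e : d.-primitive_root (omega ^+ e) by rewrite prim_root_exp_coprime // coprime_e_d.
have [i zi] := prim_rootP omega_e zd.
have i0 : (0 < i)%N by case: i zi => -[|i] //= _ zi; case: z1; rewrite /mu zi expr1.
have -> : z = zeta i by rewrite zi /zeta -exprM mulnC.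
by apply: kX; rewrite i0 ltn_ord.
Qed.

Lemma kratio_zeta_cover (P : pred F) (R : seq nat) :
  (forall i, (0 < i < d)%N = (i \in R) || ((d - i)%N \in R)) ->
  {in R, forall j, P (kratio k (zeta j))} -> forall i, (0 < i < d)%N -> P (kratio k (zeta i)).
Proof.
move=> cover PR i hi; move: (hi); rewrite cover => /orP[/PR //|/PR].
by rewrite kratio_zeta_sub.
Qed.

Lemma star_cond_cover {R : seq nat} {rows} : twist_classifies d R rows ->
  star_cond (F := F) d k (s * t) <-> all (fun j => kratio k (zeta j) ^+ (s * t) == 1) R.
Proof.
move=> /twist_classifies_cover cover; apply: (iff_trans star_condE).
split=> [kX | /allP kX i hi]; first by apply/allP => j jR; apply/eqP/kX; rewrite cover jR.
exact/eqP/(kratio_zeta_cover (fun x => x ^+ (s * t) == 1) _ cover kX).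
Qed.

Lemma permutes_star : star_cond (F := F) d k (s * t) -> permutes f.
Proof.
move=> /star_condE kX.
have kX0 i : (0 < i < d)%N -> kratio k (zeta i) != 0 /\ rexp i = 0%N.
  by move=> hi; have /andP[i0 _] := hi; rewrite -(mod0n d); apply/kratioX_eq; rewrite ?expr0 ?kX.
apply: permutes_fpoly => [i /kX0[] // |].
have -> : [seq twist d E rexp i | i <- iota 0 d] = [seq twist d E (fun=> 0%N) i | i <- iota 0 d].
  apply/eq_in_map => i; rewrite mem_iota add0n => id; rewrite /twist.
  by case: (posnP i) => [-> //|i0]; rewrite (kX0 i _).2 // i0.
exact: uniq_twist0.
Qed.

Lemma signrX_s : (-1 : F) ^+ s = 1.
Proof.
have sqr1 : ((-1 : F) ^+ s) ^+ 2 = 1 by rewrite exprAC sqrrN !expr1n.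
have : ((-1 : F) ^+ s) ^+ d = 1 by apply: unity_root_d; rewrite oppr_eq0 oner_eq0.
by rewrite -[d]odd_double_half d_odd exprD expr1 -muln2 mulnC exprM sqr1 expr1n mulr1.
Qed.

Lemma star_cond_d3 : d = 3%N -> coprime d k -> star_cond (F := F) d k (s * t).
Proof.
move=> d3 dk; apply/star_condE => i hi; rewrite /kratio.
have z3 : zeta i ^+ 3 = 1 by rewrite -d3 omegaX_unity_root.
have zV : zeta i - (zeta i)^-1 != 0.
  apply: contraNneq (zeta_sqr_neq1 hi) => /eqP; rewrite subr_eq0 => /eqP zV.
  by rewrite expr2 {1}zV mulVf ?zeta_neq0.
have : (k %% 3 = 1 \/ k %% 3 = 2)%N.
  have : ~~ (3 %| k)%N by rewrite -prime_coprime // -d3.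
  rewrite /dvdn; have : (k %% 3 < 3)%N by rewrite ltn_mod.
  by case: (k %% 3)%N => [|[|[|]]]; auto.
rewrite -(expr_mod k z3) => -[]->; first by rewrite expr1 divff // expr1n.
have -> : zeta i ^+ 2 = (zeta i)^-1.
  by apply: (mulIf (zeta_neq0 i)); rewrite -exprSr z3 mulVf ?zeta_neq0.
by rewrite invrK -opprB mulNr divff // exprM signrX_s expr1n.
Qed.

Lemma permutes_fpoly_classified {R : seq nat} {rows} : twist_classifies d R rows ->
  permutes f <->
  has (fun g => all (fun j => kratio k (zeta j) ^+ (s * t) == omega ^+ (E * g j)) R) rows.
Proof.
move=> tc; have cover := twist_classifies_cover tc.
have R_gt0 j : j \in R -> (0 < j)%N by move=> jR; have := cover j; rewrite jR => /andP[].
have twistE := twist_classifiesP tc E_mod_d rexp0 rexp_lt rexp_sub.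
split=> [fb | kX].
  have nz := permutes_fpoly_kratio fb.
  have := permutes_fpoly_uniq fb; rewrite twistE -has_pred1 has_map.
  apply: sub_has => g /eqP/esym/eq_in_map rexpE; apply/allP => j jR.
  apply/eqP/(kratioX_eq (R_gt0 j jR)); split; last exact: (rexpE j jR).
  by apply: nz; rewrite cover jR.
have /(has_nthP (fun=> 0%N))[n _ /allP kXn] := kX.
apply: permutes_fpoly => [|].
  apply: (kratio_zeta_cover (fun x => x != 0) _ cover) => j jR.
  by have /eqP/(kratioX_eq (R_gt0 j jR))[] := kXn j jR.
rewrite twistE -has_pred1 has_map; apply: sub_has kX => g /allP kXg.
by apply/eqP/esym/eq_in_map => j jR; have /eqP/(kratioX_eq (R_gt0 j jR))[] := kXg j jR.
Qed.

Lemma permutes_fpoly_d5 : d = 5%N ->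
  permutes f <-> star_cond (F := F) d k (s * t).
Proof.
move=> d5; have tc : twist_classifies d [:: 1; 2] [:: fun=> 0%N].
  by rewrite d5; exact: twist_classifies5.
apply: (iff_trans (permutes_fpoly_classified tc)); apply: iff_sym.
apply: (iff_trans (star_cond_cover tc)).
by rewrite has_seq1 muln0 expr0.
Qed.

Lemma omegaX_eps1 i : omega ^ (2 * 1 * E%:Z * i%:Z) = omega ^+ (E * (2 * i)).
Proof. by rewrite mulr1 -!PoszM -exprnP; congr (_ ^+ _); ring. Qed.

Lemma omegaX_epsN1 i : d = 7%N -> omega ^ (2 * (-1) * E%:Z * i%:Z) = omega ^+ (E * (5 * i)).
Proof.
move=> d7; rewrite mulrN1 !mulNr -!PoszM -exprz_inv -exprnP exprVn.
have inv : omega ^+ (2 * E * i) * omega ^+ (E * (5 * i)) = 1.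
  rewrite -exprD (_ : (2 * E * i + E * (5 * i) = E * i * 7)%N); last by ring.
  by rewrite -d7 exprM omegaX_unity_root.
by rewrite -[_^-1]mulr1 -inv mulKf // expf_neq0 // omega_neq0.
Qed.

Lemma permutes_fpoly_d7 : d = 7%N ->
  permutes f <-> star_cond (F := F) d k (s * t) \/
    exists eps : int, (eps = 1 \/ eps = -1) /\
      forall i : nat, i \in [:: 1; 2; 4]%N -> zratio i ^+ (s * t) = omega ^ (2 * eps * E%:Z * i%:Z).
Proof.
move=> d7.
have tc : twist_classifies d [:: 1; 2; 4] [:: fun=> 0; fun j => 2 * j; fun j => 5 * j]%N.
  by rewrite d7; exact: twist_classifies7.
have has3 (a : pred (nat -> nat)) x y z : has a [:: x; y; z] = [|| a x, a y | a z].
  by rewrite /= orbF.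
apply: (iff_trans (permutes_fpoly_classified tc)); rewrite has3 muln0 expr0; split.
  case/or3P=> [/(star_cond_cover tc) | kX | kX]; [by left | right; exists 1 | right; exists (-1)].
  - by split=> [|i /(allP kX)/eqP]; [left | rewrite -kratio_zetaE omegaX_eps1].
  - by split=> [|i /(allP kX)/eqP]; [right | rewrite -kratio_zetaE omegaX_epsN1].
case=> [/(star_cond_cover tc) -> // | [eps [[]-> kX]]]; apply/or3P; [apply: Or32 | apply: Or33];
  by apply/allP => i iR; apply/eqP; rewrite kratio_zetaE kX // ?omegaX_eps1 ?omegaX_epsN1.
Qed.

Lemma permutes_fpoly_d11 : d = 11%N ->
  permutes f <-> star_cond (F := F) d k (s * t) \/
    exists psi : 'F_11 -> 'F_11, C11 psi /\
      forall i : 'F_11, nzsq11 i -> zratio (val i) ^+ (s * t) = omega ^+ (E * val (psi i)).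
Proof.
move=> d11.
have tc : twist_classifies d squares11
    ((fun=> 0%N) :: [seq (fun j => val (psi j%:R)) | psi <- psi11]).
  by rewrite d11; exact: twist_classifies11.
apply: (iff_trans (permutes_fpoly_classified tc)).
rewrite -cat1s has_cat has_seq1 has_map muln0 expr0; split.
  case/orP=> [/(star_cond_cover tc) | /(C11_psi11 _)[psi [Cpsi /allP kX]]]; first by left.
  right; exists psi; split=> //; apply/nzsq11P => j jS.
  by rewrite val_squares11 // -kratio_zetaE; apply/eqP/kX.
case=> [/(star_cond_cover tc) -> // | [psi [Cpsi kX]]].
apply/orP; right; apply/(C11_psi11 _); exists psi; split=> //.
apply/allP => j jS; apply/eqP; have := (nzsq11P _).1 kX j jS.
by rewrite val_squares11 // -kratio_zetaE.
Qed.

End Criterion.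

Theorem corollary3p5 (F : finFieldType) (p : nat) (r v k t : nat)
  (omega : F) :
  p \in [pchar F] ->
  (0 < r)%N -> (0 < v)%N -> (0 < k)%N -> (0 < t)%N ->
  let q := #|F| in
  let s := gcdn v q.-1 in
  let d := (q.-1 %/ s)%N in
  let e := (v %/ s)%N in
  let f : {poly F} := fpoly r v k t in
  let E := (2 * r + v * t * (k - 1))%N in
  coprime r s -> coprime d k ->
  (gcdn d E <= 2)%N ->
  ((k%:Z) ^+ (s * t) = (-1) ^+ ((d + 1) * (r + 1)) %[mod p%:Z])%Z ->
  prime d -> odd d ->
  d.-primitive_root omega ->
  [/\ star_cond (F := F) d k (s * t) -> permutes f,
      d = 3%N -> permutes f,
      d = 5%N -> (permutes f <-> star_cond (F := F) d k (s * t)),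
      d = 7%N -> (permutes f <->
        (star_cond (F := F) d k (s * t) \/
         exists eps : int, (eps = 1 \/ eps = -1) /\
           forall i : nat, i \in [:: 1; 2; 4]%N ->
             ((omega ^+ (i * k * e) - omega ^- (i * k * e))
               / (omega ^+ (i * e) - omega ^- (i * e))) ^+ (s * t)
             = omega ^ (2 * eps * (E%:Z) * (i%:Z))))
    & d = 11%N -> (permutes f <->
        (star_cond (F := F) d k (s * t) \/
         exists psi : 'F_11 -> 'F_11, C11 psi /\
           forall i : 'F_11, nzsq11 i ->
             ((omega ^+ (val i * k * e) - omega ^- (val i * k * e))
               / (omega ^+ (val i * e) - omega ^- (val i * e))) ^+ (s * t)
             = omega ^+ (E * val (psi i))))].
Proof.
move=> pF r_gt0 v_gt0 k_gt0 t_gt0 q s d e f E r_s d_k d_E k_cong d_prime d_odd omega_prim.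
subst q s d e f E.
have kX_st : (k%:R : F) ^+ (gcdn v #|F|.-1 * t) = 1.
  by apply: (natrX_eq1_pchar pF); rewrite k_cong -signr_odd oddM addn1 /= d_odd.
have E_mod_d : ((2 * r + v * t * (k - 1)) %% (#|F|.-1 %/ gcdn v #|F|.-1) != 0)%N.
  by apply: gcdn_le_ndvd d_E; apply: d_gt2.
split.
- by apply: (permutes_star (omega := omega)).
- move=> d3; apply: (permutes_star (omega := omega)) => //.
  by apply: (star_cond_d3 (omega := omega)).
- by move=> d5; apply: (permutes_fpoly_d5 (omega := omega)).
- by move=> d7; apply: (permutes_fpoly_d7 (omega := omega)).
- by move=> d11; apply: (permutes_fpoly_d11 (omega := omega)).
Qed.
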